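(* Let $\Gamma$ be a residually nilpotent group whose abelianization $\Gamma/[\Gamma,\Gamma]$ is finitely generated. Then $\Gamma$ is parafree if and only if there exist a free group $F$ of finite rank and a homomorphism $\varphi:F\to\Gamma$ which induces an isomorphism $P\mathcal{N}i(\varphi):P\mathcal{N}i(F)\to P\mathcal{N}i(\Gamma)$ of true pronilpotent completions.
   Context: The lower central series is $C^1(\Gamma)=\Gamma$, $C^{j+1}(\Gamma)=[\Gamma,C^j(\Gamma)]$. A group $\Gamma$ is parafree if it is residually nilpotent and there exists a free group $F$ such that $F/C^j(F)$ and $\Gamma/C^j(\Gamma)$ are isomorphic for all $j\ge1$. For a group $H$, the true pronilpotent completion $P\mathcal{N}i(H)$ is the completion of $H/\bigcap N$ for the topology whose basis of neighbourhoods of the identity consists of the images of the normal subgroups $N$ with $H/N$ nilpotent; equivalently $\varprojlim H/N$ over such $N$. A homomorphism $\varphi:H\to K$ induces a continuous homomorphism $P\mathcal{N}i(\varphi):P\mathcal{N}i(H)\to P\mathcal{N}i(K)$. *)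

From Stdlib Require Import List.

Record grp := Grp {
  carrier :> Type;
  gmul : carrier -> carrier -> carrier;
  gone : carrier;
  ginv : carrier -> carrier;
  gmulA : forall x y z, gmul x (gmul y z) = gmul (gmul x y) z;
  gmul1l : forall x, gmul gone x = x;
  gmul1r : forall x, gmul x gone = x;
  gmulVl : forall x, gmul (ginv x) x = gone;
  gmulVr : forall x, gmul x (ginv x) = gone }.

Arguments gmul {g}.
Arguments gone {g}.
Arguments ginv {g}.

Definition is_hom {H K : grp} (f : H -> K) : Prop :=
  forall x y, f (gmul x y) = gmul (f x) (f y).

Definition comm {H : grp} (a b : H) : H := gmul (gmul (ginv a) (ginv b)) (gmul a b).

Inductive gen {H : grp} (S : H -> Prop) : H -> Prop :=
| gen_in x : S x -> gen S x
| gen_one : gen S gone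
| gen_mul x y : gen S x -> gen S y -> gen S (gmul x y)
| gen_inv x : gen S x -> gen S (ginv x).

(* lcs n = C^{n+1}: lcs 0 = H, lcs (n+1) = [H, lcs n] *)
Fixpoint lcs {H : grp} (n : nat) : H -> Prop :=
  match n with
  | 0 => fun _ => True
  | S m => gen (fun z => exists a b, lcs m b /\ z = comm a b)
  end.

(* lower central series with the paper's indexing: C 1 = H, C (j+1) = [H, C j]
   (C 0 is also H; only j >= 1 is used) *)
Definition C {H : grp} (j : nat) : H -> Prop := lcs (pred j).

Definition cong {H : grp} (N : H -> Prop) (x y : H) : Prop := N (gmul (ginv x) y).

Definition is_normal {H : grp} (N : H -> Prop) : Prop :=
  N gone /\ (forall x y, N x -> N y -> N (gmul x y)) /\ (forall x, N x -> N (ginv x)) /\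
  (forall g x, N x -> N (gmul (gmul (ginv g) x) g)).

Definition residually_nilpotent (H : grp) : Prop :=
  forall x : H, (forall j, 1 <= j -> C j x) -> x = gone.

(* Gamma/[Gamma,Gamma] is finitely generated: finitely many elements together
   with C 2 = [Gamma,Gamma] generate Gamma *)
Definition abelianization_fg (H : grp) : Prop :=
  exists s : list H, forall x : H, gen (fun y => In y s \/ C 2 y) x.

Definition is_free_basis {X : Type} {F : grp} (b : X -> F) : Prop :=
  forall (G : grp) (f : X -> G),
    exists h : F -> G, is_hom h /\ (forall x, h (b x) = f x) /\
      (forall h' : F -> G, is_hom h' -> (forall x, h' (b x) = f x) -> forall y, h' y = h y).

(* H/N ≅ K/M as groups (N, M normal), written out: a map psi : H -> K inducing
   a well-defined, injective, multiplicative, surjective map H/N -> K/M. *)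
Definition quot_isomorphic {H K : grp} (N : H -> Prop) (M : K -> Prop) : Prop :=
  exists psi : H -> K,
    (forall x y, cong N x y <-> cong M (psi x) (psi y)) /\
    (forall x y, cong M (psi (gmul x y)) (gmul (psi x) (psi y))) /\
    (forall z, exists x, cong M (psi x) z).

Definition parafree (G : grp) : Prop :=
  residually_nilpotent G /\
  exists (X : Type) (F : grp) (b : X -> F), is_free_basis b /\
    forall j, 1 <= j -> quot_isomorphic (C (H := F) j) (C (H := G) j).

(* N normal with H/N nilpotent (i.e. C^c(H) <= N for some c) *)
Definition nilq {H : grp} (N : H -> Prop) : Prop :=
  is_normal N /\ exists c, forall x, C c x -> N x.

Record NQ (H : grp) := MkNQ { nq : H -> Prop; nq_nil : nilq nq }.
Arguments nq {H}.

(* True pronilpotent completion, as the inverse limit of the H/N: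
   compatible families (x_N)_N of representatives; two families are identified
   by PNi_eqv. *)
Definition PNi (H : grp) : Type :=
  { x : NQ H -> H | forall N M : NQ H, (forall h, nq N h -> nq M h) ->
      cong (nq M) (x N) (x M) }.

Definition PNi_eqv {H : grp} (x y : PNi H) : Prop :=
  forall N : NQ H, cong (nq N) (proj1_sig x N) (proj1_sig y N).

Section HomFacts.
Context {H K : grp} (f : H -> K) (hf : is_hom f).

Lemma hom_one : f gone = gone.
Proof.
  assert (E : f gone = gmul (f gone) (f gone)) by (rewrite <- hf, gmul1l; reflexivity).
  assert (E2 : gmul (ginv (f gone)) (f gone) = gmul (ginv (f gone)) (gmul (f gone) (f gone)))
    by (rewrite <- E; reflexivity).
  rewrite gmulA, gmulVl, gmul1l in E2. symmetry; exact E2.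
Qed.

Lemma hom_inv x : f (ginv x) = ginv (f x).
Proof.
  assert (E : gmul (f (ginv x)) (f x) = gone) by (rewrite <- hf, gmulVl; apply hom_one).
  rewrite <- (gmul1r _ (f (ginv x))), <- (gmulVr _ (f x)), gmulA, E, gmul1l.
  reflexivity.
Qed.

Lemma lcs_hom n x : lcs n x -> lcs n (f x).
Proof.
  revert x; induction n as [|n IH]; simpl; intros x Hx; [exact I|].
  induction Hx as [z Hz| |u v _ IHu _ IHv|u _ IHu].
  - destruct Hz as (a & b & Hb & ->). apply gen_in. exists (f a), (f b).
    split; [apply IH; exact Hb|]. unfold comm. rewrite !hf, !hom_inv. reflexivity.
  - rewrite hom_one. apply gen_one.
  - rewrite hf. apply gen_mul; assumption.
  - rewrite hom_inv. apply gen_inv; assumption.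
Qed.

Lemma pre_nilq (N : K -> Prop) : nilq N -> nilq (fun h => N (f h)).
Proof.
  intros [[H1 [HM [HI HC]]] [c Hc]]. split; [split; [|split; [|split]]|].
  - rewrite hom_one; exact H1.
  - intros x y Hx Hy. rewrite hf. apply HM; assumption.
  - intros x Hx. rewrite hom_inv. apply HI; assumption.
  - intros g x Hx. rewrite !hf, hom_inv. apply HC; assumption.
  - exists c. intros x Hx. apply Hc. apply lcs_hom. exact Hx.
Qed.

Definition pre_NQ (N : NQ K) : NQ H := MkNQ H (fun h => nq N (f h)) (pre_nilq _ (nq_nil K N)).

Definition PNi_map (x : PNi H) : PNi K.
Proof.
  refine (exist _ (fun N => f (proj1_sig x (pre_NQ N))) _).
  intros N M sub.
  pose proof (proj2_sig x (pre_NQ N) (pre_NQ M) (fun h hh => sub _ hh)) as E.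
  unfold cong in *; simpl in *. rewrite hf, hom_inv in E. exact E.
Defined.
End HomFacts.

(* A map g : PNi H -> PNi K (here always induced by a homomorphism, hence
   automatically a continuous homomorphism) is an isomorphism of topological
   groups: bijective (modulo identification of families) with continuous
   inverse, i.e. it maps basic open neighbourhoods onto neighbourhoods. *)
Definition PNi_iso {H K : grp} (g : PNi H -> PNi K) : Prop :=
  (forall x y, PNi_eqv (g x) (g y) -> PNi_eqv x y) /\
  (forall y, exists x, PNi_eqv (g x) y) /\
  (forall (x : PNi H) (N : NQ H), exists N' : NQ K, forall x' : PNi H,
      cong (nq N') (proj1_sig (g x') N') (proj1_sig (g x) N') ->
      cong (nq N) (proj1_sig x' N) (proj1_sig x N)).

(* A homomorphism phi : F -> G induces an isomorphism of true pronilpotent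
   completions iff it induces isomorphisms F/C^n F -> G/C^n G for all n, because
   the C^n are cofinal among the normal subgroups with nilpotent quotient.
   If G is parafree, the free group F of the definition has finite rank (its
   abelianization is that of G), and an isomorphism F/C^2 F -> G/C^2 G lifts to a
   homomorphism phi : F -> G.  It is onto modulo every C^n, since C^n is generated
   by commutators modulo C^{n+1}.  It is injective on each layer C^n/C^{n+1}:
   the layers are finitely generated abelian groups, phi maps the layer of F onto
   that of G, which is isomorphic to it by parafreeness, and a surjective
   endomorphism of a finitely generated abelian group is injective. *)

From Stdlib Require Import Setoid Morphisms List ClassicalEpsilon ProofIrrelevance.
From mathcomp Require Import all_boot ssralg ssrint matrix poly mxpoly.
Set Implicit Arguments. Unset Strict Implicit. Unset Printing Implicit Defensive.
Import GRing.Theory.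

Declare Scope group_scope.
Notation "x * y" := (gmul x y) : group_scope.
Notation "x ^-1" := (ginv x) : group_scope.
Local Open Scope group_scope.

(** * Groups and the lower central series *)

Section GroupLaws.
Context {H : grp}.
Implicit Types x y z : H.

Lemma mulgA x y z : x * (y * z) = x * y * z. Proof. exact: gmulA. Qed.
Lemma mul1g x : gone * x = x. Proof. exact: gmul1l. Qed.
Lemma mulg1 x : x * gone = x. Proof. exact: gmul1r. Qed.
Lemma mulVg x : x^-1 * x = gone. Proof. exact: gmulVl. Qed.
Lemma mulgV x : x * x^-1 = gone. Proof. exact: gmulVr. Qed.
Lemma mulKg x y : x^-1 * (x * y) = y. Proof. by rewrite mulgA mulVg mul1g. Qed.
Lemma mulKVg x y : x * (x^-1 * y) = y. Proof. by rewrite mulgA mulgV mul1g. Qed.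
Lemma mulgK x y : x * y * y^-1 = x. Proof. by rewrite -mulgA mulgV mulg1. Qed.
Lemma mulgVK x y : x * y^-1 * y = x. Proof. by rewrite -mulgA mulVg mulg1. Qed.

Lemma invg_unique x y : x * y = gone -> y = x^-1.
Proof. by move=> xy1; rewrite -(mulKg x y) xy1 mulg1. Qed.
Lemma invgK x : (x^-1)^-1 = x.
Proof. by symmetry; apply: invg_unique; rewrite mulVg. Qed.
Lemma invMg x y : (x * y)^-1 = y^-1 * x^-1.
Proof. by symmetry; apply: invg_unique; rewrite mulgA mulgK mulgV. Qed.
Lemma invg1 : (gone : H)^-1 = gone.
Proof. by symmetry; apply: invg_unique; rewrite mulg1. Qed.
End GroupLaws.

Ltac gsimpl :=
  repeat progress rewrite ?invMg ?invgK ?invg1 ?mulgA ?mul1g ?mulg1 ?mulgK ?mulgVK ?mulVg ?mulgV.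

Definition conjg {H : grp} (g x : H) := g^-1 * x * g.

Class Normal {H : grp} (N : H -> Prop) := normal_pf : is_normal N.

Section NormalSubgroups.
Context {H : grp} (N : H -> Prop) {hN : Normal N}.
Implicit Types x y g : H.

Lemma normal1 : N gone. Proof. by case: hN. Qed.
Lemma normalM x y : N x -> N y -> N (x * y). Proof. by case: hN => _ [+ _]; apply. Qed.
Lemma normalV x : N x -> N x^-1. Proof. by case: hN => _ [_ [+ _]]; apply. Qed.
Lemma normalJ g x : N x -> N (conjg g x). Proof. by case: hN => _ [_ [_ +]]; apply. Qed.

#[global] Instance cong_Equivalence : Equivalence (cong N).
Proof.
split.
- by move=> x; rewrite /cong mulVg; apply: normal1.
- by move=> x y /normalV; rewrite /cong invMg invgK.
- by move=> x y z h1 h2; rewrite /cong -(mulKVg y z) mulgA; apply: normalM.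
Qed.

#[global] Instance gmul_Proper : Proper (cong N ==> cong N ==> cong N) (@gmul H).
Proof.
move=> x x' hx y y' hy; rewrite /cong.
have -> : (x * y)^-1 * (x' * y') = conjg y (x^-1 * x') * (y^-1 * y') by rewrite /conjg; gsimpl.
by apply: normalM => //; apply: normalJ.
Qed.

#[global] Instance ginv_Proper : Proper (cong N ==> cong N) (@ginv H).
Proof.
move=> x y hxy; rewrite /cong invgK.
have -> : x * y^-1 = conjg y^-1 (y^-1 * x) by rewrite /conjg; gsimpl.
by apply: normalJ; change (cong N y x); symmetry.
Qed.

#[global] Instance comm_Proper : Proper (cong N ==> cong N ==> cong N) (@comm H).
Proof. by move=> x x' hx y y' hy; rewrite /comm hx hy; reflexivity. Qed.

Lemma cong1l x : cong N gone x <-> N x.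
Proof. by rewrite /cong invg1 mul1g. Qed.
Lemma cong1r x : cong N x gone <-> N x.
Proof.
split=> h; first by apply/cong1l; change (cong N gone x); symmetry.
by symmetry; apply/cong1l.
Qed.
Lemma cong_mem x y : cong N x y -> N x -> N y.
Proof. by move=> xy Nx; rewrite -(mulKVg x y); apply: normalM. Qed.
End NormalSubgroups.
Arguments cong1r {H} N {hN} x.

Lemma cong_sub {H : grp} (N M : H -> Prop) x y :
  (forall z, N z -> M z) -> cong N x y -> cong M x y.
Proof. by move=> NM; apply: NM. Qed.

Section Commutators.
Context {H : grp}.
Implicit Types x y z a b g k w : H.

Lemma conjgM g x y : conjg g (x * y) = conjg g x * conjg g y. Proof. by rewrite /conjg; gsimpl. Qed.
Lemma conjgV g x : conjg g x^-1 = (conjg g x)^-1. Proof. by rewrite /conjg; gsimpl. Qed.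
Lemma conjg1 g : conjg g gone = gone. Proof. by rewrite /conjg; gsimpl. Qed.
Lemma conjg_comm g a b : conjg g (comm a b) = comm (conjg g a) (conjg g b).
Proof. by rewrite /conjg /comm; gsimpl. Qed.
Lemma invg_comm a b : (comm a b)^-1 = comm b a. Proof. by rewrite /comm; gsimpl. Qed.
Lemma commMl x y z : comm (x * y) z = conjg y (comm x z) * comm y z.
Proof. by rewrite /comm /conjg; gsimpl. Qed.
Lemma commMr x y z : comm x (y * z) = comm x z * conjg z (comm x y).
Proof. by rewrite /comm /conjg; gsimpl. Qed.
Lemma commVl x y : comm x^-1 y = (conjg x^-1 (comm x y))^-1.
Proof. by rewrite /comm /conjg; gsimpl. Qed.
Lemma commVr x y : comm x y^-1 = (conjg y^-1 (comm x y))^-1.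
Proof. by rewrite /comm /conjg; gsimpl. Qed.
Lemma comm1l a : comm gone a = gone. Proof. by rewrite /comm; gsimpl. Qed.
Lemma comm1r a : comm a gone = gone. Proof. by rewrite /comm; gsimpl. Qed.

Lemma gen_min (S N : H -> Prop) {hN : Normal N} x :
  (forall z, S z -> N z) -> gen S x -> N x.
Proof.
move=> SN; elim=> [z /SN // | | u v _ Nu _ Nv | u _ Nu].
- exact: normal1.
- exact: normalM.
- exact: normalV.
Qed.

Lemma gen_gen (S T : H -> Prop) x : (forall z, S z -> gen T z) -> gen S x -> gen T x.
Proof.
move=> ST; elim=> [z /ST // | | u v _ ? _ ? | u _ ?].
- exact: gen_one.
- exact: gen_mul.
- exact: gen_inv.
Qed.

Lemma gen_mono (S T : H -> Prop) x : (forall z, S z -> T z) -> gen S x -> gen T x.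
Proof. by move=> ST; apply: gen_gen => z /ST; apply: gen_in. Qed.

Lemma gen_normal (S : H -> Prop) :
  (forall g z, S z -> S (conjg g z)) -> Normal (gen S).
Proof.
move=> SJ; split; [exact: gen_one | split; [exact: gen_mul | split; [exact: gen_inv |]]].
move=> g x; elim=> [z /(SJ g) | | u v _ ? _ ? | u _ ?].
- exact: gen_in.
- by rewrite -/(conjg g gone) conjg1; apply: gen_one.
- by rewrite -/(conjg g (u * v)) conjgM; apply: gen_mul.
- by rewrite -/(conjg g u^-1) conjgV; apply: gen_inv.
Qed.

#[global] Instance lcs_Normal n : Normal (@lcs H n).
Proof.
elim: n => [|n IH]; first by do !split.
apply: gen_normal => g z [a [b [hb ->]]].
exists (conjg g a), (conjg g b); split; [exact: normalJ | exact: conjg_comm].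
Qed.

Lemma lcs_comm_r n a b : lcs n b -> lcs n.+1 (comm a b).
Proof. by move=> hb; apply: gen_in; exists a, b. Qed.
Lemma lcs_comm_l n a b : lcs n a -> lcs n.+1 (comm a b).
Proof. by move=> ha; rewrite -invg_comm; apply: normalV; apply: lcs_comm_r. Qed.

Lemma lcsS_sub n x : lcs n.+1 x -> lcs n x.
Proof.
apply: gen_min => _ [a [b [hb ->]]].
have -> : comm a b = conjg a b^-1 * b by rewrite /comm /conjg; gsimpl.
by apply: normalM => //; apply: normalJ; apply: normalV.
Qed.

Lemma lcs_sub m n x : m <= n -> lcs n x -> lcs m x.
Proof.
move=> /subnK <-; elim: (n - m) x => [|d IH] x //.
by rewrite addSn => /lcsS_sub /IH.
Qed.

Lemma lcs_central n k x : lcs n k -> cong (lcs n.+1) (x * k) (k * x).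
Proof.
move=> hk; rewrite /cong.
have -> : (x * k)^-1 * (k * x) = comm k x by rewrite /comm; gsimpl.
exact: lcs_comm_l.
Qed.

Lemma conjg_lcs_l n g w : lcs n g -> cong (lcs n.+1) (conjg g w) w.
Proof.
move=> hg; rewrite /cong.
have -> : (conjg g w)^-1 * w = comm g w by rewrite /comm /conjg; gsimpl.
exact: lcs_comm_l.
Qed.

Lemma conjg_lcs_r n g w : lcs n w -> cong (lcs n.+1) (conjg g w) w.
Proof.
move=> hw; rewrite /cong.
have -> : (conjg g w)^-1 * w = comm g w by rewrite /comm /conjg; gsimpl.
exact: lcs_comm_r.
Qed.

Lemma comm_lcs_pert n a b k1 k2 : lcs n k1 -> lcs n k2 ->
  cong (lcs n.+1) (comm (a * k1) (b * k2)) (comm a b).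
Proof.
move=> h1 h2; rewrite commMl (conjg_lcs_l _ h1) commMr (conjg_lcs_l _ h2).
have -> : cong (lcs n.+1) (comm k1 (b * k2)) gone by apply/cong1r; apply: lcs_comm_l.
have -> : cong (lcs n.+1) (comm a k2) gone by apply/cong1r; apply: lcs_comm_r.
rewrite mul1g mulg1; reflexivity.
Qed.
End Commutators.

Definition qhom {H K : grp} (M : K -> Prop) (f : H -> K) :=
  forall x y, cong M (f (x * y)) (f x * f y).

Section QuasiHomomorphisms.
Context {H K : grp} (M : K -> Prop) {hM : Normal M} (f : H -> K) (hf : qhom M f).

Lemma qhom1 : cong M (f gone) gone.
Proof.
have e := hf gone gone; rewrite mul1g in e.
have : cong M ((f gone)^-1 * f gone) ((f gone)^-1 * (f gone * f gone)) by rewrite -e; reflexivity.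
by rewrite mulVg mulKg; symmetry.
Qed.

Lemma qhomV x : cong M (f x^-1) (f x)^-1.
Proof.
have e := hf x^-1 x; rewrite mulVg qhom1 in e.
have : cong M (gone * (f x)^-1) (f x^-1 * f x * (f x)^-1) by rewrite -e; reflexivity.
by rewrite mul1g mulgK; symmetry.
Qed.

Lemma qhom_comm a b : cong M (f (comm a b)) (comm (f a) (f b)).
Proof. by rewrite /comm !hf !qhomV; reflexivity. Qed.

Lemma qhom_lcs n x : (forall z, M z -> lcs n z) -> lcs n x -> lcs n (f x).
Proof.
elim: n x => [|n IH] x Mn //.
have Mn' z : M z -> lcs n z by move/Mn/lcsS_sub.
have tr u v : cong M u v -> lcs n.+1 u -> lcs n.+1 v.
  by move=> uv; apply: cong_mem; apply: cong_sub Mn uv.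
elim=> [_ [a [b [hb ->]]] | | u v _ hu _ hv | u _ hu].
- by apply: (tr (comm (f a) (f b))); [symmetry; apply: qhom_comm | apply/lcs_comm_r/IH].
- by apply: (tr gone); [symmetry; apply: qhom1 | apply: normal1].
- by apply: (tr (f u * f v)); [symmetry; apply: hf | apply: normalM].
- by apply: (tr (f u)^-1); [symmetry; apply: qhomV | apply: normalV].
Qed.

Lemma qhom_onto_lcs (hs : forall z, exists x, cong M (f x) z) n z :
  lcs n z -> exists x, lcs n x /\ cong M (f x) z.
Proof.
elim: n z => [|n IH] z; first by move=> _; have [x] := hs z; exists x.
elim=> [_ [a [b [hb ->]]] | | u v _ [x1 [h1 e1]] _ [x2 [h2 e2]] | u _ [x1 [h1 e1]]].
- have [a' ea] := hs a; have [b' [hb' eb]] := IH _ hb.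
  exists (comm a' b'); split; first exact: lcs_comm_r.
  by rewrite qhom_comm ea eb; reflexivity.
- by exists gone; split; [apply: normal1 | apply: qhom1].
- exists (x1 * x2); split; first exact: normalM.
  by rewrite hf e1 e2; reflexivity.
- exists x1^-1; split; first exact: normalV.
  by rewrite qhomV e1; reflexivity.
Qed.
End QuasiHomomorphisms.

Lemma hom_qhom {H K : grp} (M : K -> Prop) {hM : Normal M} (f : H -> K) :
  is_hom f -> qhom M f.
Proof. by move=> hf x y; rewrite hf; reflexivity. Qed.

Section LcsLevels.
Context {F G : grp} (phi : F -> G) (hphi : is_hom phi).

Definition lcs_surjective := forall n z, exists x, cong (lcs n) (phi x) z.
Definition lcs_injective := forall n x, lcs n (phi x) -> lcs n x.

Lemma hom_cong_lcs n x y : cong (lcs n) x y -> cong (lcs n) (phi x) (phi y).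
Proof. by rewrite /cong -(hom_inv phi hphi) -hphi; apply: lcs_hom. Qed.

Lemma lcs_injective_cong : lcs_injective -> forall n x y,
  cong (lcs n) (phi x) (phi y) -> cong (lcs n) x y.
Proof. by move=> hi n x y; rewrite /cong -(hom_inv phi hphi) -hphi; apply: hi. Qed.

Lemma lcs_surjective_onto : lcs_surjective -> forall m n z,
  lcs n z -> exists x, lcs n x /\ cong (lcs m) (phi x) z.
Proof. by move=> hs m; apply: (qhom_onto_lcs (hom_qhom (M := lcs m) hphi)) => z; apply: hs. Qed.

(* C^{n+1} is generated modulo C^{n+2} by commutators, and these only depend on
   their arguments modulo C^{n+1} (comm_lcs_pert). *)
Lemma lcs_surjective_from_lcs1 :
  (forall z, exists x, cong (lcs 1) (phi x) z) -> lcs_surjective.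
Proof.
move=> h1; elim=> [|n IH] z; first by exists gone.
case: n IH => [_|n IH]; first exact: h1.
have layer w : lcs 1 w -> exists y, cong (lcs n.+2) (phi y) w.
  elim=> [_ [a [b [_ ->]]] | | u v _ [y1 e1] _ [y2 e2] | u _ [y1 e1]].
  - have [a1 ea] := IH a; have [b1 eb] := IH b.
    exists (comm a1 b1).
    rewrite -(mulKVg (phi a1) a) -(mulKVg (phi b1) b) comm_lcs_pert //.
    by rewrite /comm !hphi !(hom_inv phi hphi); reflexivity.
  - by exists gone; rewrite (hom_one phi hphi); reflexivity.
  - by exists (y1 * y2); rewrite hphi e1 e2; reflexivity.
  - by exists y1^-1; rewrite (hom_inv phi hphi) e1; reflexivity.
have [x ex] := IH z.
have [y ey] := layer _ (lcs_sub (isT : 1 <= n.+1) ex).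
by exists (x * y); rewrite hphi ey mulKVg; reflexivity.
Qed.
End LcsLevels.

(** * True pronilpotent completions *)

Section Completion.
Context {H : grp}.

#[global] Instance NQ_Normal (N : NQ H) : Normal (nq N).
Proof. by case: (nq_nil _ N). Qed.

Lemma nilq_lcs n : nilq (@lcs H n).
Proof. by split; [apply: lcs_Normal | exists n.+1]. Qed.

Definition NQlcs n : NQ H := MkNQ H (lcs n) (nilq_lcs n).

Lemma NQ_bound (N : NQ H) : exists k, forall x, lcs k x -> nq N x.
Proof. by case: (nq_nil _ N) => _ [c hc]; exists c.-1. Qed.

Definition NQ_level (N : NQ H) : nat :=
  proj1_sig (constructive_indefinite_description _ (NQ_bound N)).

Lemma NQ_levelP (N : NQ H) x : lcs (NQ_level N) x -> nq N x.
Proof. exact: (proj2_sig (constructive_indefinite_description _ (NQ_bound N))). Qed.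

Lemma PNi_compat (x : PNi H) (N M : NQ H) :
  (forall h, nq N h -> nq M h) -> cong (nq M) (proj1_sig x N) (proj1_sig x M).
Proof. exact: (proj2_sig x). Qed.

Lemma PNi_compat_lcs (x : PNi H) a b :
  a <= b -> cong (lcs a) (proj1_sig x (NQlcs b)) (proj1_sig x (NQlcs a)).
Proof. by move=> ab; apply: PNi_compat => h /=; apply: lcs_sub. Qed.

Definition PNi_const (z : H) : PNi H.
Proof. by exists (fun _ => z) => N M _; reflexivity. Defined.

(* the C^k are cofinal among the N, so a sequence compatible modulo the C^k
   determines a point of the completion *)
Section LevelSequence.
Variables (v : nat -> H) (hv : forall a b, a <= b -> cong (lcs a) (v b) (v a)).

Definition PNi_of_levels : PNi H.
Proof.
refine (exist _ (fun N => v (NQ_level N)) _) => N M NM.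
case: (leqP (NQ_level N) (NQ_level M)) => lvl.
- by symmetry; apply: cong_sub (hv lvl) => z /NQ_levelP /NM.
- by apply: cong_sub (hv (ltnW lvl)) => z /NQ_levelP.
Defined.
End LevelSequence.
End Completion.

Arguments NQlcs : clear implicits.

Section CompletionMap.
Context {F G : grp} (phi : F -> G) (hphi : is_hom phi).
Notation Phi := (PNi_map phi hphi).

Lemma NQ_lcs_of_pre (hs : lcs_surjective phi) (N : NQ G) k :
  (forall x, lcs k x -> nq N (phi x)) -> forall z, lcs k z -> nq N z.
Proof.
move=> kN z /(lcs_surjective_onto hphi hs (NQ_level N)) [w [hw ew]].
rewrite -(mulKVg (phi w) z); apply: normalM; first exact: kN.
exact: NQ_levelP.
Qed.

Lemma PNi_map_reflect (hi : lcs_injective phi) (N : NQ F) :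
  exists k, forall x x' : PNi F,
    cong (lcs k) (proj1_sig (Phi x) (NQlcs G k)) (proj1_sig (Phi x') (NQlcs G k)) ->
    cong (nq N) (proj1_sig x N) (proj1_sig x' N).
Proof.
exists (NQ_level N) => x x' /= /(lcs_injective_cong hphi hi) e.
set P := pre_NQ phi hphi (NQlcs G (NQ_level N)).
have PN h : nq P h -> nq N h by move=> /hi /NQ_levelP.
rewrite -(PNi_compat x PN) -(PNi_compat x' PN).
exact: cong_sub (@NQ_levelP F N) e.
Qed.

Lemma PNi_map_surj (hs : lcs_surjective phi) (hi : lcs_injective phi) y :
  exists x, PNi_eqv (Phi x) y.
Proof.
have [v hv] := choice (fun k x => cong (lcs k) (phi x) (proj1_sig y (NQlcs G k)))
  (fun k => hs k _).
have compat a b : a <= b -> cong (lcs a) (v b) (v a).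
  move=> ab; apply: (lcs_injective_cong hphi hi).
  have vb : cong (lcs a) (phi (v b)) (proj1_sig y (NQlcs G b)).
    by apply: (cong_sub _ (hv b)) => z; apply: lcs_sub.
  rewrite vb (hv a); exact: PNi_compat_lcs.
exists (PNi_of_levels compat) => N /=.
set k := NQ_level (pre_NQ phi hphi N).
have kN : forall z, lcs k z -> nq N z.
  by apply: (NQ_lcs_of_pre hs) => x /NQ_levelP.
rewrite (cong_sub kN (hv k)).
exact: PNi_compat.
Qed.

Lemma PNi_iso_of_levels : lcs_surjective phi -> lcs_injective phi -> PNi_iso Phi.
Proof.
move=> hs hi; split; [|split].
- move=> x y xy N; have [k hk] := PNi_map_reflect hi N.
  exact/hk/xy.
- exact: PNi_map_surj.
- move=> x N; have [k hk] := PNi_map_reflect hi N.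
  by exists (NQlcs G k) => x'; apply: hk.
Qed.

Lemma PNi_iso_surjective : PNi_iso Phi -> lcs_surjective phi.
Proof.
move=> [_ [hsur _]] n z; have [x hx] := hsur (PNi_const z).
by exists (proj1_sig x (pre_NQ phi hphi (NQlcs G n))); apply: (hx (NQlcs G n)).
Qed.

Lemma PNi_iso_injective : PNi_iso Phi -> lcs_injective phi.
Proof.
move=> iso n w hw; have hs := PNi_iso_surjective iso.
have [_ [_ hopen]] := iso.
have [N' hN'] := hopen (PNi_const gone) (NQlcs F n).
have [v [hv ev]] := lcs_surjective_onto hphi hs (NQ_level N') hw.
have : cong (lcs n) (v^-1 * w) gone.
  apply: (hN' (PNi_const (v^-1 * w))); rewrite /= (hom_one phi hphi); apply/(cong1r (nq N')).
  by apply: NQ_levelP; rewrite hphi (hom_inv phi hphi).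
by move/(cong1r (lcs n)) => hvw; rewrite -(mulKVg v w); apply: normalM.
Qed.

Lemma PNi_isoP : PNi_iso Phi <-> lcs_surjective phi /\ lcs_injective phi.
Proof.
split; first by move=> iso; split; [apply: PNi_iso_surjective | apply: PNi_iso_injective].
by case; apply: PNi_iso_of_levels.
Qed.
End CompletionMap.

(** * Free groups *)

Section Subgroup.
Context {H : grp} (S : H -> Prop).

Definition subg_carrier := {x : H | gen S x}.

Lemma subg_eq (u v : subg_carrier) : proj1_sig u = proj1_sig v -> u = v.
Proof.
by case: u => x hx; case: v => y hy /= exy; subst y; rewrite (proof_irrelevance _ hx hy).
Qed.

Definition subg : grp.
Proof.
refine (@Grp subg_carrier
  (fun u v => exist _ (proj1_sig u * proj1_sig v) (@gen_mul H S _ _ (proj2_sig u) (proj2_sig v)))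
  (exist _ gone (gen_one S))
  (fun u => exist _ (proj1_sig u)^-1 (@gen_inv H S _ (proj2_sig u))) _ _ _ _ _);
  by move=> *; apply: subg_eq; rewrite /= ?mulgA ?mul1g ?mulg1 ?mulVg ?mulgV.
Defined.
End Subgroup.

Definition Z2 : grp.
Proof.
refine (@Grp bool xorb false id _ _ _ _ _) => *.
all: by rewrite /= ?Bool.xorb_assoc_reverse ?Bool.xorb_nilpotent ?Bool.xorb_false_r.
Defined.

Section FreeGroups.
Context {X : Type} {F : grp} (b : X -> F) (fb : is_free_basis b).

Lemma free_basis_gen y : gen (fun z => exists x, z = b x) y.
Proof.
set S := fun z => exists x, z = b x.
have [h [hh [hb _]]] := @fb (subg S) (fun x => exist _ (b x) (@gen_in F S _ (ex_intro _ x erefl))).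
have [h0 [_ [_ uniq]]] := @fb F b.
have idE : y = h0 y := uniq id (fun _ _ => erefl) (fun _ => erefl) y.
have hE : proj1_sig (h y) = h0 y.
  by apply: (uniq (fun y => proj1_sig (h y))) => [u v | x]; rewrite ?hh ?hb.
rewrite idE -hE.
exact: proj2_sig (h y).
Qed.

(* a basis element outside Y survives in the map F -> Z/2 sending it to 1 and
   the rest of the basis to 0, which kills b(Y) and [F, F] *)
Lemma free_basis_cover (Y : list X) :
  (forall w, gen (fun z => (exists x, In x Y /\ z = b x) \/ lcs 1 z) w) -> forall x, In x Y.
Proof.
move=> hY x; case: (classic (In x Y)) => // xY.
pose f (x' : X) : Z2 := if excluded_middle_informative (x' = x) then true else false.
have [h [hh [hb _]]] := @fb Z2 f.
have hcomm w : lcs 1 w -> h w = false.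
  elim=> [_ [a [c [_ ->]]] | | u v _ hu _ hv | u _ hu].
  - by rewrite /comm !hh !(hom_inv h hh) /=; case: (h a); case: (h c).
  - exact: (hom_one h hh).
  - by rewrite hh hu hv.
  - by rewrite (hom_inv h hh) hu.
have hker w : gen (fun z => (exists x, In x Y /\ z = b x) \/ lcs 1 z) w -> h w = false.
  elim=> [_ [[x' [x'Y ->]] | /hcomm //] | | u v _ hu _ hv | u _ hu].
  - by rewrite hb /f; case: excluded_middle_informative => // ex; subst x'.
  - exact: (hom_one h hh).
  - by rewrite hh hu hv.
  - by rewrite (hom_inv h hh) hu.
by have := hker _ (hY (b x)); rewrite hb /f; case: excluded_middle_informative.
Qed.

Lemma gen_finite_support w : gen (fun z => exists x, z = b x) w ->
  exists Y : list X, gen (fun z => exists x, In x Y /\ z = b x) w.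
Proof.
have widen Y Y' v : incl Y Y' -> gen (fun z => exists x, In x Y /\ z = b x) v ->
    gen (fun z => exists x, In x Y' /\ z = b x) v.
  by move=> YY'; apply: gen_mono => _ [x [/YY' xY' ->]]; exists x.
elim=> [_ [x ->] | | u v _ [Y1 h1] _ [Y2 h2] | u _ [Y1 h1]].
- by exists (x :: nil); apply: gen_in; exists x; split => //; left.
- by exists nil; apply: gen_one.
- exists (Y1 ++ Y2); apply: gen_mul.
  + by apply: widen h1; apply: incl_appl; apply: incl_refl.
  + by apply: widen h2; apply: incl_appr; apply: incl_refl.
- by exists Y1; apply: gen_inv.
Qed.

Lemma free_basis_finite : abelianization_fg F -> exists Y : list X, forall x, In x Y.
Proof.
move=> [s hs].
have [Y hY] : exists Y : list X, forall t, In t s -> gen (fun z => exists x, In x Y /\ z = b x) t.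
  elim: s {hs} => [|t s [Y hY]]; first by exists nil.
  have [Y1 h1] := gen_finite_support (free_basis_gen t).
  exists (Y1 ++ Y) => t' [<- | t's].
  + by apply: gen_mono h1 => _ [x [xY1 ->]]; exists x; split => //; apply: in_or_app; left.
  + by apply: gen_mono (hY _ t's) => _ [x [xY ->]]; exists x; split => //; apply: in_or_app; right.
exists Y; apply: free_basis_cover => w.
apply: gen_gen (hs w) => z [/hY zY | z2]; last by apply: gen_in; right.
by apply: gen_mono zY => z' hz'; left.
Qed.
End FreeGroups.

Lemma abelianization_fg_quot_iso {F G : grp} :
  quot_isomorphic (C (H := F) 2) (C (H := G) 2) -> abelianization_fg G -> abelianization_fg F.
Proof.
move=> [psi [hc [hq hsur]]] [s hs]; have hq' : qhom (lcs 1) psi := hq.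
have [s' hs'] : exists s' : list F, forall t, In t s -> exists w, In w s' /\ cong (lcs 1) (psi w) t.
  elim: s {hs} => [|t s [s' hs']]; first by exists nil.
  have [w hw] := hsur t.
  exists (w :: s') => t' [<- | /hs' [w' [w's' e]]]; first by exists w; split => //; left.
  by exists w'; split => //; right.
have lift z : gen (fun y => In y s \/ C 2 y) z ->
    exists w, gen (fun y => In y s' \/ C 2 y) w /\ cong (lcs 1) (psi w) z.
  elim=> [y [/hs' [w [ws' e]] | hy] | | u v _ [w1 [h1 e1]] _ [w2 [h2 e2]] | u _ [w1 [h1 e1]]].
  - by exists w; split => //; apply: gen_in; left.
  - exists gone; split; first exact: gen_one.
    by rewrite (qhom1 hq'); symmetry; apply/(cong1r (lcs 1)).
  - by exists gone; split; [apply: gen_one | apply: (qhom1 hq')].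
  - by exists (w1 * w2); split; [apply: gen_mul | rewrite hq' e1 e2; reflexivity].
  - by exists w1^-1; split; [apply: gen_inv | rewrite (qhomV hq') e1; reflexivity].
exists s' => x; have [w [hw /hc wx]] := lift _ (hs (psi x)).
by rewrite -(mulKVg w x); apply: gen_mul => //; apply: gen_in; right.
Qed.

Section FiniteEnumeration.
Context {X : Type} (Y : list X) (hY : forall x, In x Y).
Let Z := nodup (fun x y : X => excluded_middle_informative (x = y)) Y.
Let ord := {i : nat | (i < length Z)%coq_nat}.

Lemma enum_index_ex x : exists i : ord, List.nth (proj1_sig i) Z x = x.
Proof.
have [i [hi e]] := In_nth Z x x (proj2 (nodup_In _ _ _) (hY x)).
by exists (exist _ i hi).
Qed.

Lemma enum_ord : exists n (e : {i : nat | (i < n)%coq_nat} -> X)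
  (e' : X -> {i : nat | (i < n)%coq_nat}), (forall x, e (e' x) = x) /\ (forall i, e' (e i) = i).
Proof.
have [idx hidx] := choice _ enum_index_ex.
have idx_inj x y : idx x = idx y -> x = y.
  move=> exy; have hx := hidx x; have hy := hidx y; rewrite exy in hx.
  by rewrite -[LHS]hx -[RHS]hy; apply: nth_indep; case: (idx y).
have idx_surj (i : ord) : exists x, idx x = i.
  case: i => i hi.
  have elt (l : list X) : (i < length l)%coq_nat -> X.
    by case: l => [|d tl] h; [case: (PeanoNat.Nat.nlt_0_r _ h) | exact: d].
  have d := elt _ hi.
  exists (List.nth i Z d); case E : (idx _) => [j hj].
  have := hidx (List.nth i Z d); rewrite E /= (nth_indep Z _ d hj) => nthE.
  have ij : j = i by apply: (proj1 (NoDup_nth Z d) (NoDup_nodup _ Y)).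
  by subst j; rewrite (proof_irrelevance _ hj hi).
have [e he] := choice _ idx_surj.
exists (length Z), e, idx; split => [x | i]; last exact: he.
by apply: idx_inj; rewrite he.
Qed.
End FiniteEnumeration.

Lemma free_basis_reindex {X X' : Type} {F : grp} (b : X -> F) (e : X' -> X) (e' : X -> X') :
  is_free_basis b -> (forall x, e (e' x) = x) -> (forall x', e' (e x') = x') ->
  is_free_basis (fun x' => b (e x')).
Proof.
move=> fb ee' e'e G f'; have [h [hh [hb hu]]] := fb G (fun x => f' (e' x)).
exists h; split => //; split; first by move=> x'; rewrite hb e'e.
by move=> h' hh' hb'; apply: hu => // x; rewrite -{1}(ee' x) hb'.
Qed.

(** * Layers of the lower central series *)

Definition span {H : grp} (N : H -> Prop) (T : list H) := gen (fun z => In z T \/ N z).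

Lemma span_cong {H : grp} (N : H -> Prop) {hN : Normal N} T u v :
  cong N u v -> span N T u -> span N T v.
Proof. by move=> e hu; rewrite -(mulKVg u v); apply: gen_mul => //; apply: gen_in; right. Qed.

Lemma span_conjg {H : grp} n T (g u : H) :
  lcs n u -> span (lcs n.+1) T u -> span (lcs n.+1) T (conjg g u).
Proof. by move=> hu; apply: span_cong; symmetry; apply: conjg_lcs_r. Qed.

Section LayerGenerators.
Context {H : grp} (S : list H) (hS : forall y, gen (fun z => In z S) y).
Variables (n : nat) (T : list H) (hT : forall t, In t T -> lcs n t).
Hypothesis hspan : forall w, lcs n w -> span (lcs n.+1) T w.

Let T' := flat_map (fun s => List.map (comm s) T) S.

Lemma span_comm_gen a t : In t T -> span (lcs n.+2) T' (comm a t).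
Proof.
move=> tT; have ht := hT tT.
elim: (hS a) => [s sS | | x y _ hx _ hy | x _ hx].
- by apply: gen_in; left; apply/in_flat_map; exists s; split => //; apply: in_map.
- by rewrite comm1l; apply: gen_one.
- by rewrite commMl; apply: gen_mul => //; apply: span_conjg => //; apply: lcs_comm_r.
- by rewrite commVl; apply/gen_inv/span_conjg => //; apply: lcs_comm_r.
Qed.

Lemma span_comm a b : span (lcs n.+1) T b -> span (lcs n.+2) T' (comm a b).
Proof.
have inT y : span (lcs n.+1) T y -> lcs n y by apply: gen_min => z [/hT | /lcsS_sub].
elim=> [z [zT | hz] | | y z hy IHy hz IHz | y hy IHy].
- exact: span_comm_gen.
- by apply: gen_in; right; apply: lcs_comm_r.
- by rewrite comm1r; apply: gen_one.
- by rewrite commMr; apply: gen_mul => //; apply: span_conjg => //; apply/lcs_comm_r/inT.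
- by rewrite commVr; apply/gen_inv/span_conjg => //; apply/lcs_comm_r/inT.
Qed.

Lemma lcsS_span : (forall t, In t T' -> lcs n.+1 t) /\
  forall w, lcs n.+1 w -> span (lcs n.+2) T' w.
Proof.
split; first by move=> _ /in_flat_map [s [_ /in_map_iff [t [<- /hT]]]]; apply: lcs_comm_r.
move=> w; elim=> [_ [a [b [hb ->]]] | | y z _ hy _ hz | y _ hy].
- exact/span_comm/hspan.
- exact: gen_one.
- exact: gen_mul.
- exact: gen_inv.
Qed.
End LayerGenerators.

Lemma lcs_layer_fg {H : grp} (S : list H) (hS : forall y, gen (fun z => In z S) y) n :
  exists T : list H, (forall t, In t T -> lcs n t) /\ forall w, lcs n w -> span (lcs n.+1) T w.
Proof.
elim: n => [|n [T [hT hspan]]].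
  by exists S; split => // w _; apply: gen_mono (hS w) => z; left.
by eexists; apply: lcsS_span hspan.
Qed.

Section Powers.
Context {H : grp}.
Implicit Types x y : H.

Fixpoint gpow x (n : nat) : H := match n with 0 => gone | S m => gpow x m * x end.

Definition gpowz x (z : int) : H :=
  match z with Posz n => gpow x n | Negz n => (gpow x n.+1)^-1 end.

Lemma gpowSl x n : gpow x n.+1 = x * gpow x n.
Proof.
elim: n => [|n IH]; first by rewrite /= mul1g mulg1.
by change (gpow x n.+1 * x = x * (gpow x n * x)); rewrite IH mulgA.
Qed.

Lemma gpowz0 x : gpowz x 0 = gone. Proof. by []. Qed.
Lemma gpowz1 x : gpowz x 1 = x. Proof. exact: mul1g. Qed.

Lemma gpowzS x z : gpowz x (z + 1)%R = gpowz x z * x.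
Proof.
case: z => [n|[|n]]; first by rewrite -PoszD addn1.
- by rewrite NegzE addNr /= mul1g mulVg.
- have -> : (Negz n.+1 + 1)%R = Negz n.
    by rewrite !NegzE -(addn1 n.+1) PoszD opprD subrK.
  by rewrite /gpowz [gpow x n.+2]gpowSl invMg mulgVK.
Qed.

Lemma gpowzB1 x z : gpowz x (z - 1)%R = gpowz x z * x^-1.
Proof. by rewrite -[in RHS](subrK 1%R z) gpowzS mulgK. Qed.

Lemma gpowzD x a b : gpowz x (a + b)%R = gpowz x a * gpowz x b.
Proof.
elim/int_rect: b => [|n IH|n IH].
- by rewrite addr0 gpowz0 mulg1.
- by rewrite -addn1 PoszD addrA !gpowzS IH mulgA.
- by rewrite -addn1 PoszD opprD addrA !gpowzB1 IH mulgA.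
Qed.

Lemma gpowz_mem (N : H -> Prop) {hN : Normal N} x z : N x -> N (gpowz x z).
Proof.
move=> Nx; have Npow n : N (gpow x n) by elim: n => [|n IH]; [apply: normal1 | apply: normalM].
by case: z => n; [exact: Npow | exact: normalV (Npow _)].
Qed.

#[global] Instance gpowz_Proper (N : H -> Prop) {hN : Normal N} :
  Proper (cong N ==> eq ==> cong N) gpowz.
Proof.
move=> x y xy z _ <-.
have e n : cong N (gpow x n) (gpow y n).
  by elim: n => [|n IH] /=; [reflexivity | rewrite IH xy; reflexivity].
by case: z => n; rewrite /gpowz e; reflexivity.
Qed.

Fixpoint prodg (k : nat) (f : nat -> H) : H :=
  match k with 0 => gone | S k' => prodg k' f * f k' end.

Lemma prodg_ext k f g : (forall i, i < k -> f i = g i) -> prodg k f = prodg k g.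
Proof. by elim: k => [|k IH] fg //=; rewrite IH ?fg // => i /ltnW /fg. Qed.

Lemma prodg_cong (N : H -> Prop) {hN : Normal N} k f g :
  (forall i, cong N (f i) (g i)) -> cong N (prodg k f) (prodg k g).
Proof. by move=> fg; elim: k => [|k IH] /=; [reflexivity | rewrite IH fg; reflexivity]. Qed.

Lemma prodg_mem (N : H -> Prop) {hN : Normal N} k f : (forall i, N (f i)) -> N (prodg k f).
Proof. by move=> Nf; elim: k => [|k IH] /=; [apply: normal1 | apply: normalM]. Qed.

Lemma prodg_mul n k f g : (forall i, lcs n (g i)) ->
  cong (lcs n.+1) (prodg k (fun i => f i * g i)) (prodg k f * prodg k g).
Proof.
move=> hg; elim: k => [|k IH]; cbn [prodg]; first by rewrite mulg1; reflexivity.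
rewrite IH -!mulgA; apply: gmul_Proper; first reflexivity.
rewrite !mulgA; apply: gmul_Proper; last reflexivity.
by symmetry; apply: lcs_central; apply: prodg_mem.
Qed.

Lemma prodg_delta k (f : nat -> H) i :
  prodg k (fun j => if j == i then f j else gone) = if i < k then f i else gone.
Proof.
elim: k => [|k IH] //=; rewrite IH [k == i]eq_sym ltnS.
by case: ltngtP => [ik|ki|->]; rewrite ?mulg1 ?mul1g ?leqnn // ?(ltnW ik) // leqNgt ki.
Qed.
End Powers.

Lemma horner_mx_coef {R : comNzRingType} n' (A : 'M[R]_n'.+1) (p : {poly R}) :
  horner_mx A p = (\sum_(i < size p) p`_i *: A ^+ i)%R.
Proof.
rewrite -{1}[p]coefK poly_def rmorph_sum; apply: eq_bigr => i _.
by rewrite -mul_polyC rmorphM /= horner_mx_C rmorphXn /= horner_mx_X -mulmxE mul_scalar_mx.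
Qed.

(* Vasconcelos' argument: a surjective endomorphism u |-> u D of the finitely
   generated abelian group Z^r/K is injective.  Surjectivity is witnessed by A,
   with A D = 1 modulo K. *)
Section SurjectiveEndomorphism.
Local Open Scope ring_scope.
Variables (n' : nat) (K : 'rV[int]_n'.+1 -> Prop).
Hypotheses (K0 : K 0) (KD : forall u v, K u -> K v -> K (u + v)) (KN : forall u, K u -> K (- u)).
Variable D : 'M[int]_n'.+1.
Hypothesis KM : forall u, K u -> K (u *m D).

Lemma KZ (c : int) u : K u -> K (c *: u).
Proof.
move=> Ku; have KZn m : K (m%:Z *: u).
  by elim: m => [|m IH]; rewrite ?scale0r // -[m.+1]addn1 PoszD scalerDl scale1r; apply: KD.
by case: c => m; rewrite ?NegzE ?scaleNr //; apply: KN.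
Qed.

Lemma K_sum (I : Type) (r : seq I) (P : pred I) (F : I -> 'rV_n'.+1) :
  (forall i, P i -> K (F i)) -> K (\sum_(i <- r | P i) F i).
Proof. by move=> h; apply: big_ind. Qed.

Lemma K_mulX k u : K u -> K (u *m D ^+ k).
Proof.
elim: k u => [|k IH] u Ku; first by rewrite expr0 mulmx1.
by rewrite exprS mulmxA; apply/IH/KM.
Qed.

Definition rowsK m (M : 'M[int]_(m, n'.+1)) := forall i, K (row i M).

Lemma rowsK_mull m p (B : 'M[int]_(p, m)) M : rowsK M -> rowsK (B *m M).
Proof. by move=> KM' i; rewrite row_mul mulmx_sum_row; apply: K_sum => j _; apply/KZ/KM'. Qed.

Lemma rowsK_mulv (u : 'rV_n'.+1) M : rowsK M -> K (u *m M).
Proof. by move=> KM'; rewrite -(row_id ord0 (u *m M)); apply: rowsK_mull. Qed.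

Lemma rowsK_mulX m k M : rowsK M -> rowsK (M *m D ^+ k :> 'M_(m, _)).
Proof. by move=> KM' i; rewrite row_mul; apply/K_mulX/KM'. Qed.

Lemma rowsK_add m (M N : 'M_(m, _)) : rowsK M -> rowsK N -> rowsK (M + N).
Proof. by move=> KM' KN' i; rewrite linearD; apply: KD; [apply: KM' | apply: KN']. Qed.

Lemma rowsK_opp m (M : 'M_(m, _)) : rowsK M -> rowsK (- M).
Proof. by move=> KM' i; rewrite linearN; apply/KN/KM'. Qed.

Lemma rowsK_scale m c (M : 'M_(m, _)) : rowsK M -> rowsK (c *: M).
Proof. by move=> KM' i; rewrite linearZ; apply/KZ/KM'. Qed.

Lemma rowsK_sum m (I : Type) (r : seq I) (P : pred I) (F : I -> 'M_(m, _)) :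
  (forall i, P i -> rowsK (F i)) -> rowsK (\sum_(i <- r | P i) F i).
Proof. by move=> h; apply: big_ind => //; [move=> i; rewrite row0 | apply: rowsK_add]. Qed.

Variable A : 'M[int]_n'.+1.
Hypothesis KAD : rowsK (1 - A *m D).

Lemma rowsK_powers k p : (k <= p)%N -> rowsK (A ^+ k *m D ^+ p - D ^+ (p - k)).
Proof.
elim: k p => [|k IH] [|p] // kp; try by rewrite expr0 mul1mx subn0 subrr => i; rewrite row0.
have -> : A ^+ k.+1 *m D ^+ p.+1 - D ^+ (p.+1 - k.+1)
   = (A ^+ k *m D ^+ p - D ^+ (p - k)) - (A ^+ k *m (1 - A *m D)) *m D ^+ p.
  rewrite subSS !mulmxE mulrBr mulr1 mulrBl opprB addrA [in RHS]addrAC.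
  by rewrite [in RHS](addrAC (A ^+ k * D ^+ p)) subrr add0r [in LHS]addrC exprSr exprS !mulrA.
by apply: rowsK_add; [apply: IH | apply/rowsK_opp/rowsK_mulX/rowsK_mull].
Qed.

Lemma surj_endo_inj u : K (u *m D) -> K u.
Proof.
move=> KuD; set p := char_poly A.
have sp : size p = n'.+2 by rewrite size_char_poly.
have lp : p`_n'.+1 = 1 by have := char_poly_monic A; rewrite monicE /lead_coef sp => /eqP.
have CH := Cayley_Hamilton A; rewrite horner_mx_coef sp in CH.
pose Q := \sum_(i < n'.+1) p`_i *: D ^+ (n'.+1 - i).-1.
have pD : \sum_(i < n'.+2) p`_i *: D ^+ (n'.+1 - i) = 1 + D *m Q.
  rewrite big_ord_recr /= lp subnn expr0 scale1r addrC mulmx_sumr; congr (_ + _).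
  apply: eq_bigr => i _; rewrite -scalemxAr mulmxE -exprS prednK //.
  by rewrite subn_gt0.
have KpD : rowsK (1 + D *m Q).
  have E : \sum_(i < n'.+2) p`_i *: (A ^+ i *m D ^+ n'.+1 - D ^+ (n'.+1 - i)) = - (1 + D *m Q).
    rewrite -pD -sumrN -[X in X = _]subr0 -[X in _ - X = _](mul0mx _ (D ^+ n'.+1)).
    rewrite -{2}CH mulmx_suml -sumrB; apply: eq_bigr => i _.
    by rewrite scalerBr -scalemxAl /p addrAC subrr add0r.
  rewrite -[1 + _]opprK -E; apply/rowsK_opp/rowsK_sum => i _.
  by apply/rowsK_scale/rowsK_powers; rewrite -ltnS.
have -> : u = u *m (1 + D *m Q) - (u *m D) *m Q by rewrite mulmxDr mulmx1 mulmxA addrK.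
apply: KD; first exact: rowsK_mulv.
apply: KN; rewrite /Q mulmx_sumr; apply: K_sum => i _.
by rewrite -scalemxAr; apply/KZ/K_mulX.
Qed.
End SurjectiveEndomorphism.

Definition qadd {K : grp} (N : K -> Prop) (r : nat) (f : 'rV[int]_r -> K) :=
  forall u v, cong N (f (u + v)%R) (f u * f v).

Section QuasiAdditive.
Context {K : grp} (N : K -> Prop) {hN : Normal N} (r' : nat).
Variables (f : 'rV[int]_r'.+1 -> K) (hf : qadd N f).

Lemma qadd0 : cong N (f 0%R) gone.
Proof.
have e := hf 0%R 0%R; rewrite addr0 in e.
have : cong N ((f 0%R)^-1 * f 0%R) ((f 0%R)^-1 * (f 0%R * f 0%R)) by rewrite -e; reflexivity.
by rewrite mulVg mulKg; symmetry.
Qed.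

Lemma qaddN u : cong N (f (- u)%R) (f u)^-1.
Proof.
have e := hf u (- u)%R; rewrite subrr qadd0 in e.
have : cong N ((f u)^-1 * gone) ((f u)^-1 * (f u * f (- u)%R)) by rewrite -e; reflexivity.
by rewrite mulg1 mulKg; symmetry.
Qed.

Lemma qaddZ (c : int) u : cong N (f (c *: u)%R) (gpowz (f u) c).
Proof.
elim/int_rect: c => [|k IH|k IH].
- by rewrite scale0r qadd0; reflexivity.
- by rewrite -[k.+1]addn1 PoszD scalerDl scale1r hf IH gpowzS; reflexivity.
- rewrite -[k.+1]addn1 PoszD opprD scalerDl scaleN1r hf IH qaddN gpowzB1; reflexivity.
Qed.

Lemma qadd_sum k (X : nat -> 'rV[int]_r'.+1) :
  cong N (f (\sum_(0 <= i < k) X i)%R) (prodg k (fun i => f (X i))).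
Proof.
elim: k => [|k IH]; first by rewrite big_geq // qadd0; reflexivity.
by rewrite big_nat_recr //= hf IH; reflexivity.
Qed.

Lemma qadd_coord u :
  cong N (f u) (prodg r'.+1 (fun i => gpowz (f (delta_mx ord0 (inord i))) (u ord0 (inord i)))).
Proof.
have {1}-> : u = (\sum_(0 <= i < r'.+1) u ord0 (inord i) *: delta_mx ord0 (inord i))%R.
  by rewrite {1}(row_sum_delta u) big_mkord; apply: eq_bigr => j _; rewrite inord_val.
by rewrite qadd_sum; apply: prodg_cong => i; apply: qaddZ.
Qed.
End QuasiAdditive.

Lemma qadd_eq {K : grp} (N : K -> Prop) {hN : Normal N} r' (f g : 'rV[int]_r'.+1 -> K) :
  qadd N f -> qadd N g -> (forall i, cong N (f (delta_mx ord0 i)) (g (delta_mx ord0 i))) ->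
  forall u, cong N (f u) (g u).
Proof.
move=> hf hg fg u; rewrite (qadd_coord hf) (qadd_coord hg).
by apply: prodg_cong => i; rewrite fg; reflexivity.
Qed.

(* Each layer C^{n+1}/C^{n+2} is a quotient of Z^r via the coordinates along a
   finite generating list T; alpha and beta become matrices on Z^r. *)
Section LayerInjectivity.
Local Open Scope ring_scope.
Local Open Scope group_scope.
Context {F G : grp} (n : nat) (T : list F).
Hypotheses (hT : forall t, In t T -> lcs n t)
  (hspan : forall w, lcs n w -> span (lcs n.+1) T w).
Variables (alpha : F -> G) (halpha : is_hom alpha).
Hypothesis halpha_surj : forall z, exists x, cong (lcs n.+1) (alpha x) z.
Variables (beta : F -> G) (hbq : qhom (lcs n.+1) beta).
Hypotheses (hbc : forall x y, cong (lcs n.+1) x y <-> cong (lcs n.+1) (beta x) (beta y))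
  (hbs : forall z, exists x, cong (lcs n.+1) (beta x) z).

Local Notation r := (length T).+1.
Local Notation e_ i := (delta_mx ord0 i : 'rV[int]_r).

Definition layer_gen i := List.nth i T gone.

Definition layer_coord (u : 'rV[int]_r) : F :=
  prodg r (fun i => gpowz (layer_gen i) (u ord0 (inord i))).
Local Notation pi := layer_coord.

Lemma layer_gen_lcs i : lcs n (layer_gen i).
Proof.
case: (PeanoNat.Nat.lt_ge_cases i (length T)) => [/(nth_In T gone)/hT // | /(nth_overflow T gone)].
by rewrite /layer_gen => ->; apply: normal1.
Qed.

Lemma layer_coord_qadd : qadd (lcs n.+1) pi.
Proof.
move=> u v; rewrite /pi (prodg_ext (g := fun i =>
  gpowz (layer_gen i) (u ord0 (inord i)) * gpowz (layer_gen i) (v ord0 (inord i)))).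
  by apply: prodg_mul => i; apply: gpowz_mem; apply: layer_gen_lcs.
by move=> i _; rewrite mxE gpowzD.
Qed.

Lemma layer_coord0 : pi 0%R = gone.
Proof.
rewrite /pi (prodg_ext (g := fun _ => gone)) => [|i _]; last by rewrite mxE.
by elim: r => //= k ->; rewrite mulg1.
Qed.

Lemma layer_coord_delta i : i < r -> pi (e_ (inord i)) = layer_gen i.
Proof.
move=> ir; rewrite /pi (prodg_ext (g := fun j => if j == i then layer_gen j else gone)).
  by rewrite prodg_delta ir.
move=> j jr; rewrite mxE /= -val_eqE /= !inordK //.
by case: (j == i); rewrite ?gpowz1 ?gpowz0.
Qed.

Lemma layer_coord_onto w : lcs n w -> exists u, cong (lcs n.+1) (pi u) w.
Proof.
move=> /hspan; elim=> [z [/(In_nth T z gone) [i [/ltP ir <-]] | hz] | |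
                      x y _ [u hu] _ [v hv] | x _ [u hu]].
- by exists (e_ (inord i)); rewrite layer_coord_delta //; [reflexivity | apply: ltnW].
- by exists 0%R; rewrite layer_coord0; apply/(cong1l (lcs n.+1)).
- by exists 0%R; rewrite layer_coord0; reflexivity.
- by exists (u + v)%R; rewrite layer_coord_qadd hu hv; reflexivity.
- by exists (- u)%R; rewrite (qaddN layer_coord_qadd) hu; reflexivity.
Qed.

Lemma beta_reflect x : lcs n.+1 (beta x) -> lcs n.+1 x.
Proof.
move=> hx; apply/(cong1l (lcs n.+1)); apply/hbc.
by rewrite (qhom1 hbq); apply/(cong1l (lcs n.+1)).
Qed.

Lemma alpha_layer_matrix : exists D : 'M[int]_r,
  forall u, cong (lcs n.+1) (alpha (pi u)) (beta (pi (u *m D))).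
Proof.
have [d hd] : exists d : 'I_r -> 'rV[int]_r,
    forall j, cong (lcs n.+1) (alpha (pi (e_ j))) (beta (pi (d j))).
  apply: (choice (fun j d => cong (lcs n.+1) (alpha (pi (e_ j))) (beta (pi d)))) => j.
  have [y [hy ey]] := qhom_onto_lcs hbq hbs (lcs_hom alpha halpha _ _ (layer_gen_lcs j)).
  have [v hv] := layer_coord_onto hy.
  exists v; rewrite -(inord_val j) layer_coord_delta // -ey; symmetry; exact/hbc.
exists (\matrix_(j, k) d j ord0 k); apply: qadd_eq.
- by move=> u v; rewrite (hom_cong_lcs halpha (layer_coord_qadd u v)) halpha; reflexivity.
- by move=> u v; rewrite mulmxDl (proj1 (hbc _ _) (layer_coord_qadd _ _)) hbq; reflexivity.
- by move=> j; rewrite -rowE rowK; apply: hd.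
Qed.

Lemma beta_layer_matrix : exists A : 'M[int]_r,
  forall i, cong (lcs n.+1) (alpha (pi (row i A))) (beta (pi (e_ i))).
Proof.
have [a ha] : exists a : 'I_r -> 'rV[int]_r,
    forall i, cong (lcs n.+1) (alpha (pi (a i))) (beta (pi (e_ i))).
  apply: (choice (fun i a => cong (lcs n.+1) (alpha (pi a)) (beta (pi (e_ i))))) => i.
  have hb : lcs n (beta (pi (e_ i))).
    rewrite -(inord_val i) layer_coord_delta //.
    by apply: (qhom_lcs hbq) => [z /lcsS_sub | ]; last exact: layer_gen_lcs.
  have [y [hy ey]] := qhom_onto_lcs (hom_qhom (M := lcs n.+1) halpha) halpha_surj hb.
  have [v hv] := layer_coord_onto hy.
  by exists v; rewrite -ey; apply: hom_cong_lcs.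
by exists (\matrix_(i, k) a i ord0 k) => i; rewrite rowK; apply: ha.
Qed.
Lemma layer_inj x : lcs n x -> lcs n.+1 (alpha x) -> lcs n.+1 x.
Proof.
move=> hx hax; have [D AD] := alpha_layer_matrix; have [A hA] := beta_layer_matrix.
pose K u := lcs n.+1 (pi u).
have K0 : K 0 by rewrite /K layer_coord0; apply: normal1.
have KD u v : K u -> K v -> K (u + v).
  by move=> Ku Kv; apply: (cong_mem (symmetry (layer_coord_qadd u v))); apply: normalM.
have KN u : K u -> K (- u).
  by move=> Ku; apply: (cong_mem (symmetry (qaddN layer_coord_qadd u))); apply: normalV.
have KM u : K u -> K (u *m D).
  by move=> Ku; apply/beta_reflect/(cong_mem (AD u)); apply: lcs_hom.
have KAD : rowsK K (1 - A *m D).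
  move=> i; rewrite /K linearB /= row1 row_mul; apply: beta_reflect; apply/(cong1r (lcs n.+1)).
  rewrite (proj1 (hbc _ _) (layer_coord_qadd _ _)) hbq (proj1 (hbc _ _) (qaddN layer_coord_qadd _)).
  by rewrite (qhomV hbq) -AD hA mulgV; reflexivity.
have [u ux] := layer_coord_onto hx.
suff Ku : K u by apply: cong_mem ux Ku.
apply: (surj_endo_inj K0 KD KN KM KAD); apply/beta_reflect/(cong_mem (AD u)).
by apply: (cong_mem (hom_cong_lcs halpha (symmetry ux))).
Qed.
End LayerInjectivity.

(** * Parafree groups *)

Lemma lcs_injective_of_layers {F G : grp} (phi : F -> G) :
  (forall k w, lcs k w -> lcs k.+1 (phi w) -> lcs k.+1 w) -> lcs_injective phi.
Proof. by move=> layer; elim=> [//|k IH] w hw; apply: layer (IH _ (lcsS_sub hw)) hw. Qed.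

Lemma hom_qhom_agree {F G : grp} (M : G -> Prop) {hM : Normal M} (S : F -> Prop)
  (phi psi : F -> G) : is_hom phi -> qhom M psi ->
  (forall s, S s -> cong M (phi s) (psi s)) -> forall x, gen S x -> cong M (phi x) (psi x).
Proof.
move=> hphi hpsi agree x; elim=> [s /agree // | | u v _ hu _ hv | u _ hu].
- by rewrite (hom_one phi hphi) (qhom1 hpsi); reflexivity.
- by rewrite hphi hu hv hpsi; reflexivity.
- by rewrite (hom_inv phi hphi) hu (qhomV hpsi); reflexivity.
Qed.

Lemma free_lcs_iso {X : Type} {F G : grp} (b : X -> F) (fb : is_free_basis b) (Y : list X) :
  (forall x, In x Y) ->
  (forall j, (1 <= j)%coq_nat -> quot_isomorphic (C (H := F) j) (C (H := G) j)) ->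
  exists (phi : F -> G) (hphi : is_hom phi), lcs_surjective phi /\ lcs_injective phi.
Proof.
move=> hY hQ; have [psi [hc [hq hsur]]] := hQ 2 (PeanoNat.Nat.lt_0_succ 1).
have [phi [hphi [hphib _]]] := fb G (fun x => psi (b x)).
have agree x : cong (lcs 1) (phi x) (psi x).
  apply: (hom_qhom_agree hphi hq _ (free_basis_gen fb x)) => _ [x' ->].
  by rewrite hphib; reflexivity.
have hs : lcs_surjective phi.
  by apply: (lcs_surjective_from_lcs1 hphi) => z; have [x hx] := hsur z; exists x; rewrite agree.
exists phi, hphi; split => //; apply: lcs_injective_of_layers => k w.
have hS y : gen (fun z => In z (List.map b Y)) y.
  by apply: gen_mono (free_basis_gen fb y) => _ [x ->]; apply: in_map.
have [T [hT hspan]] := lcs_layer_fg hS k.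
have [beta [hbc [hbq hbs]]] := hQ k.+2 (PeanoNat.Nat.lt_0_succ k.+1).
exact: (layer_inj hT hspan hphi (hs k.+1) hbq hbc hbs).
Qed.

Theorem mainTheorem6 (G : grp) (hres : residually_nilpotent G) (hab : abelianization_fg G) :
  parafree G <->
  exists (n : nat) (F : grp) (b : {i : nat | (i < n)%coq_nat} -> F), is_free_basis b /\
    exists (phi : F -> G) (hphi : is_hom phi), PNi_iso (PNi_map phi hphi).
Proof.
split.
- move=> [_ [X [F [b [fb hQ]]]]].
  have habF := abelianization_fg_quot_iso (hQ 2 (PeanoNat.Nat.lt_0_succ 1)) hab.
  have [Y hY] := free_basis_finite fb habF.
  have [n [e [e' [ee' e'e]]]] := enum_ord hY.
  have [phi [hphi levels]] := free_lcs_iso fb hY hQ.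
  exists n, F, (fun i => b (e i)); split; first exact: free_basis_reindex.
  by exists phi, hphi; apply/PNi_isoP.
- move=> [n [F [b [fb [phi [hphi /PNi_isoP [hs hi]]]]]]].
  split => //; exists {i : nat | (i < n)%coq_nat}, F, b; split => // j _.
  exists phi; split; [|split].
  + by move=> x y; split; [apply: hom_cong_lcs | apply: lcs_injective_cong].
  + by move=> x y; rewrite hphi; reflexivity.
  + exact: hs.
Qed.
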